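(* Let $m,n,u,v\in\mathbb{R}$ with $m+v\neq0$ and $mu-nv=0$, and let $(G_6,g,J)$ be the three-dimensional Lorentzian Lie group described in the context. Write $\mathbb{V}_{RC}$ for the real vector space of left-invariant Ricci collineations $\xi=\lambda_1\overline{e}_1+\lambda_2\overline{e}_2+\lambda_3\overline{e}_3$ ($\lambda_i\in\mathbb{R}$ constants) associated to the Yano connection. Then: (1) if $m=0$ (so $v\neq0$), every left-invariant vector field is a left-invariant Ricci collineation, i.e. $\mathbb{V}_{RC}=\langle\overline{e}_1,\overline{e}_2,\overline{e}_3\rangle$; (2) if $m\neq0$, then $\xi$ is a left-invariant Ricci collineation iff $\lambda_1=0$ and $m\lambda_2+u\lambda_3=0$, so $\mathbb{V}_{RC}=\langle -\frac{u}{m}\overline{e}_2+\overline{e}_3\rangle$.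
   Context: $G_6$ is a connected three-dimensional Lie group whose Lie algebra has a basis $\{\overline{e}_1,\overline{e}_2,\overline{e}_3\}$ (left-invariant vector fields) with $[\overline{e}_1,\overline{e}_2]=m\overline{e}_2+n\overline{e}_3$, $[\overline{e}_1,\overline{e}_3]=u\overline{e}_2+v\overline{e}_3$, $[\overline{e}_2,\overline{e}_3]=0$, where $m+v\neq0$ and $mu-nv=0$. The metric $g$ is the left-invariant Lorentzian metric with $g(\overline{e}_1,\overline{e}_1)=g(\overline{e}_2,\overline{e}_2)=1$, $g(\overline{e}_3,\overline{e}_3)=-1$, $g(\overline{e}_i,\overline{e}_j)=0$ for $i\neq j$. $J$ is the left-invariant product structure with $J\overline{e}_1=\overline{e}_1$, $J\overline{e}_2=\overline{e}_2$, $J\overline{e}_3=-\overline{e}_3$. With $\nabla^{LC}$ the Levi-Civita connection of $g$, the Yano connection is $\nabla^{*}_XY=\nabla^{LC}_XY-\frac12(\nabla^{LC}_YJ)JX-\frac14[(\nabla^{LC}_XJ)JY-(\nabla^{LC}_{JX}J)Y]$; its curvature is $R^{*}(X,Y)Z=\nabla^{*}_X\nabla^{*}_YZ-\nabla^{*}_Y\nabla^{*}_XZ-\nabla^{*}_{[X,Y]}Z$; its Ricci tensor is $\mathrm{Ric}^{*}(X,Y)=-g(R^{*}(X,\overline{e}_1)Y,\overline{e}_1)-g(R^{*}(X,\overline{e}_2)Y,\overline{e}_2)+g(R^{*}(X,\overline{e}_3)Y,\overline{e}_3)$; and $\overline{\mathrm{Ric}^{*}}(X,Y)=\frac12(\mathrm{Ric}^{*}(X,Y)+\mathrm{Ric}^{*}(Y,X))$.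 For a left-invariant vector field $\xi$, $(\mathrm{L}_{\xi}\overline{\mathrm{Ric}^{*}})(X,Y)=\xi(\overline{\mathrm{Ric}^{*}}(X,Y))-\overline{\mathrm{Ric}^{*}}([\xi,X],Y)-\overline{\mathrm{Ric}^{*}}(X,[\xi,Y])$; $\xi$ is a left-invariant Ricci collineation if $\mathrm{L}_{\xi}\overline{\mathrm{Ric}^{*}}=0$. *)

(* Left-invariant objects on the Lie group G_6 are modelled on
   its Lie algebra: a left-invariant vector field is its coordinate row vector
   X = X_1 e1 + X_2 e2 + X_3 e3 (entries X 0 0, X 0 1, X 0 2 : R). *)
From mathcomp Require Import all_boot all_order all_algebra.
Set Implicit Arguments. Unset Strict Implicit. Unset Printing Implicit Defensive.
Import Order.TTheory GRing.Theory Num.Theory.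
Local Open Scope ring_scope.

Section G6.
Variable R : realFieldType.
Variables m n u v : R.

Definition vec := 'rV[R]_3.
Definition i1 : 'I_3 := @Ordinal 3 0 isT.
Definition i2 : 'I_3 := @Ordinal 3 1 isT.
Definition i3 : 'I_3 := @Ordinal 3 2 isT.
Definition e1 : vec := delta_mx 0 i1.
Definition e2 : vec := delta_mx 0 i2.
Definition e3 : vec := delta_mx 0 i3.
Definition c1 (X : vec) := X 0 i1.
Definition c2 (X : vec) := X 0 i2.
Definition c3 (X : vec) := X 0 i3.

(* Lie bracket: bilinear, antisymmetric extension of
   [e1,e2] = m e2 + n e3, [e1,e3] = u e2 + v e3, [e2,e3] = 0 *)
Definition br (X Y : vec) : vec :=
  (c1 X * c2 Y - c2 X * c1 Y) *: (m *: e2 + n *: e3)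
  + (c1 X * c3 Y - c3 X * c1 Y) *: (u *: e2 + v *: e3).

Definition g (X Y : vec) : R := c1 X * c1 Y + c2 X * c2 Y - c3 X * c3 Y.

Definition J (X : vec) : vec := c1 X *: e1 + c2 X *: e2 - c3 X *: e3.

(* Levi-Civita connection on left-invariant fields, by the Koszul formula
   2 g(LC_X Y, Z) = g([X,Y],Z) - g([Y,Z],X) + g([Z,X],Y),
   solved in the orthonormal frame (g(e_k,e_k) = 1, 1, -1). *)
Definition koszul (X Y Z : vec) : R :=
  (g (br X Y) Z - g (br Y Z) X + g (br Z X) Y) / 2.
Definition LC (X Y : vec) : vec :=
  koszul X Y e1 *: e1 + koszul X Y e2 *: e2 - koszul X Y e3 *: e3.

Definition DJ (X Y : vec) : vec := LC X (J Y) - J (LC X Y).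

Definition Yano (X Y : vec) : vec :=
  LC X Y - (1/2) *: DJ Y (J X)
  - (1/4) *: (DJ X (J Y) - DJ (J X) Y).

Definition Rstar (X Y Z : vec) : vec :=
  Yano X (Yano Y Z) - Yano Y (Yano X Z) - Yano (br X Y) Z.

Definition Ricstar (X Y : vec) : R :=
  - g (Rstar X e1 Y) e1 - g (Rstar X e2 Y) e2 + g (Rstar X e3 Y) e3.

Definition Ricsym (X Y : vec) : R := (Ricstar X Y + Ricstar Y X) / 2.

(* Lie derivative along a left-invariant xi, evaluated on left-invariant X, Y.
   The term xi(Ricsym(X,Y)) vanishes since Ricsym(X,Y) is a constant function
   on the group for left-invariant X, Y. *)
Definition LieRic (xi X Y : vec) : R :=
  0 - Ricsym (br xi X) Y - Ricsym X (br xi Y).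

Definition ricci_collineation (xi : vec) : Prop :=
  forall X Y : vec, LieRic xi X Y = 0.

End G6.

(* In the coordinates of the frame (e1, e2, e3) every object of the problem is
   an explicit polynomial in the coordinates.  The Yano connection comes out as
   Yano X Y = (m x2 y2, -u x3 y1 - m x2 y1, v x1 y3 - n x2 y1 + n x1 y2), and its
   Ricci tensor is the symmetric, diagonal form -(m^2 + n u) x1 y1 - m^2 x2 y2.
   Its Lie derivative along xi = (a, b, c) is the bilinear form
   -m^2 (m b + u c) (x1 y2 + x2 y1) + 2 m^3 a x2 y2 + m^2 u a (x2 y3 + x3 y2),
   which vanishes identically iff m = 0, or a = 0 and m b + u c = 0. *)
From mathcomp Require Import all_boot all_order all_algebra.
From mathcomp Require Import ring.
Import Order.TTheory GRing.Theory Num.Theory.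
Local Open Scope ring_scope.

Section Coordinates.
Variable R : realFieldType.

Definition row3 (a b c : R) : vec R := \row_(j < 3) [:: a; b; c]`_j.

Lemma c1_row3 a b c : c1 (row3 a b c) = a. Proof. by rewrite /c1 mxE. Qed.
Lemma c2_row3 a b c : c2 (row3 a b c) = b. Proof. by rewrite /c2 mxE. Qed.
Lemma c3_row3 a b c : c3 (row3 a b c) = c. Proof. by rewrite /c3 mxE. Qed.

Lemma row3E (X : vec R) : X = row3 (c1 X) (c2 X) (c3 X).
Proof.
apply/rowP => j; rewrite mxE /c1 /c2 /c3.
by case: j => [[|[|[|j]]] Hj] //=; congr (X _ _); apply: val_inj.
Qed.

Lemma row3D a b c a' b' c' :
  row3 a b c + row3 a' b' c' = row3 (a + a') (b + b') (c + c').
Proof. by rewrite [LHS]row3E /c1 /c2 /c3 !mxE. Qed.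

Lemma row3N a b c : - row3 a b c = row3 (- a) (- b) (- c).
Proof. by rewrite [LHS]row3E /c1 /c2 /c3 !mxE. Qed.

Lemma row3Z k a b c : k *: row3 a b c = row3 (k * a) (k * b) (k * c).
Proof. by rewrite [LHS]row3E /c1 /c2 /c3 !mxE. Qed.

Lemma e1_row3 : e1 R = row3 1 0 0. Proof. by rewrite [LHS]row3E /c1 /c2 /c3 !mxE. Qed.
Lemma e2_row3 : e2 R = row3 0 1 0. Proof. by rewrite [LHS]row3E /c1 /c2 /c3 !mxE. Qed.
Lemma e3_row3 : e3 R = row3 0 0 1. Proof. by rewrite [LHS]row3E /c1 /c2 /c3 !mxE. Qed.

Lemma frame_row3 l1 l2 l3 : l1 *: e1 R + l2 *: e2 R + l3 *: e3 R = row3 l1 l2 l3.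
Proof. by rewrite e1_row3 e2_row3 e3_row3 !row3Z !row3D; congr row3; ring. Qed.

End Coordinates.
Arguments row3 {R}.
Arguments row3E {R}.

Ltac row3_simpl :=
  rewrite ?e1_row3 ?e2_row3 ?e3_row3;
  rewrite ?(c1_row3, c2_row3, c3_row3, row3Z, row3N, row3D).

Section G6Coordinates.
Variable R : realFieldType.
Variables m n u v : R.

Lemma br_row3 x1 x2 x3 y1 y2 y3 : br m n u v (row3 x1 x2 x3) (row3 y1 y2 y3) =
  row3 0 ((x1 * y2 - x2 * y1) * m + (x1 * y3 - x3 * y1) * u)
         ((x1 * y2 - x2 * y1) * n + (x1 * y3 - x3 * y1) * v).
Proof. by rewrite /br; row3_simpl; congr row3; ring. Qed.

Lemma g_row3 (x1 x2 x3 y1 y2 y3 : R) :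
  g (row3 x1 x2 x3) (row3 y1 y2 y3) = x1 * y1 + x2 * y2 - x3 * y3.
Proof. by rewrite /g; row3_simpl. Qed.

Lemma J_row3 (x1 x2 x3 : R) : J (row3 x1 x2 x3) = row3 x1 x2 (- x3).
Proof. by rewrite /J; row3_simpl; congr row3; ring. Qed.

Lemma LC_row3 x1 x2 x3 y1 y2 y3 : LC m n u v (row3 x1 x2 x3) (row3 y1 y2 y3) =
  row3 (- (v * x3 * y3) + (u * x3 * y2) / 2 + (u * x2 * y3) / 2
          - (n * x3 * y2) / 2 - (n * x2 * y3) / 2 + m * x2 * y2)
       (- (u * x3 * y1) / 2 + (u * x1 * y3) / 2 + (n * x3 * y1) / 2
          + (n * x1 * y3) / 2 - m * x2 * y1)
       (- (v * x3 * y1) + (u * x2 * y1) / 2 + (u * x1 * y2) / 2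
          - (n * x2 * y1) / 2 + (n * x1 * y2) / 2).
Proof.
rewrite /LC /koszul !e1_row3 !e2_row3 !e3_row3 !br_row3 !g_row3; row3_simpl.
by congr row3; field; rewrite ?pnatr_eq0.
Qed.

Lemma DJ_row3 x1 x2 x3 y1 y2 y3 : DJ m n u v (row3 x1 x2 x3) (row3 y1 y2 y3) =
  row3 (2 * v * x3 * y3 - u * x2 * y3 + n * x2 * y3) (- (u * x1 * y3) - n * x1 * y3)
       (-2 * v * x3 * y1 + u * x2 * y1 + u * x1 * y2 - n * x2 * y1 + n * x1 * y2).
Proof.
rewrite /DJ !J_row3 !LC_row3 J_row3; row3_simpl.
by congr row3; field; rewrite ?pnatr_eq0.
Qed.

Lemma Yano_row3 x1 x2 x3 y1 y2 y3 : Yano m n u v (row3 x1 x2 x3) (row3 y1 y2 y3) =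
  row3 (m * x2 * y2) (- u * x3 * y1 - m * x2 * y1)
       (v * x1 * y3 - n * x2 * y1 + n * x1 * y2).
Proof.
rewrite /Yano !J_row3 !DJ_row3 LC_row3; row3_simpl.
by congr row3; field; rewrite ?pnatr_eq0.
Qed.

Lemma Ricstar_row3 x1 x2 x3 y1 y2 y3 :
  Ricstar m n u v (row3 x1 x2 x3) (row3 y1 y2 y3) =
  - (m ^+ 2 + n * u) * x1 * y1 - m ^+ 2 * x2 * y2.
Proof.
rewrite /Ricstar /Rstar !e1_row3 !e2_row3 !e3_row3 !br_row3 !Yano_row3.
by row3_simpl; rewrite !g_row3; ring.
Qed.

Lemma LieRic_row3 a b c x1 x2 x3 y1 y2 y3 :
  LieRic m n u v (row3 a b c) (row3 x1 x2 x3) (row3 y1 y2 y3) =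
  - (m ^+ 2 * (m * b + u * c)) * (x1 * y2 + x2 * y1)
  + 2 * m ^+ 3 * a * x2 * y2 + m ^+ 2 * u * a * (x2 * y3 + x3 * y2).
Proof.
rewrite /LieRic /Ricsym !br_row3 !Ricstar_row3.
by field; rewrite ?pnatr_eq0.
Qed.

Lemma ricci_collineation_row3 a b c :
  ricci_collineation m n u v (row3 a b c) <->
  m = 0 \/ a = 0 /\ m * b + u * c = 0.
Proof.
split; last first.
  move=> Habc X Y; rewrite (row3E X) (row3E Y) LieRic_row3.
  by case: Habc => [-> | [-> ->]]; ring.
move=> Hxi; have [-> | m_neq0] := eqVneq m 0; [by left | right].
have Lie22 := Hxi (row3 0 1 0) (row3 0 1 0).
have Lie12 := Hxi (row3 1 0 0) (row3 0 1 0).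
rewrite LieRic_row3 in Lie22; rewrite LieRic_row3 in Lie12.
have a0 : (2 * m ^+ 3) * a = 0 by rewrite -Lie22; ring.
have bc0 : m ^+ 2 * (m * b + u * c) = 0 by rewrite -[RHS]oppr0 -Lie12; ring.
move/eqP: a0; rewrite mulf_eq0 mulf_eq0 pnatr_eq0 expf_eq0 (negbTE m_neq0) andbF /=.
move/eqP: bc0; rewrite mulf_eq0 expf_eq0 (negbTE m_neq0) andbF /=.
by move=> /eqP-> /eqP->.
Qed.

End G6Coordinates.

Theorem theorem4p6 (R : realFieldType) (m n u v : R) :
  m + v != 0 -> m * u - n * v = 0 ->
  (m = 0 -> forall l1 l2 l3 : R,
     ricci_collineation m n u v (l1 *: e1 R + l2 *: e2 R + l3 *: e3 R)) /\
  (m != 0 -> forall l1 l2 l3 : R,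
     ricci_collineation m n u v (l1 *: e1 R + l2 *: e2 R + l3 *: e3 R) <->
     (l1 = 0 /\ m * l2 + u * l3 = 0)).
Proof.
move=> _ _; split=> [m0 | m_neq0] l1 l2 l3; rewrite frame_row3 ricci_collineation_row3.
  by left.
split=> [[m0 | //] | ]; last by right.
by rewrite m0 eqxx in m_neq0.
Qed.
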